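(* Let $G$ be a finite group with $|G|\ge4$, $\sigma$ an automorphism of $G$ of order two, and $S$ a symmetric subset of $G$. Let $X$ be one of $C_\Sigma(G,S)$, $C(G,S)^\sigma$, $C_\Sigma(G,S)^\sigma$, and suppose $X$ is undirected. Then $X$ is connected if and only if $S$ generates $G$.
   Context: $C_\Sigma(G,S)$ has vertex set $G$ and an edge from $x$ to $x^{-1}s$ for each $s\in S$; $C(G,S)^\sigma$ has an edge from $x$ to $\sigma(xs)$; $C_\Sigma(G,S)^\sigma$ has an edge from $x$ to $\sigma(x^{-1}s)$. A graph is undirected if its adjacency matrix is symmetric. *)

From mathcomp Require Import all_boot all_fingroup.
Set Implicit Arguments. Unset Strict Implicit. Unset Printing Implicit Defensive.
Import GroupScope.
Local Open Scope group_scope.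

Inductive graph_kind := CayleySum | TwistedCayley | TwistedCayleySum.

Definition edge_target (gT : finGroupType) (sigma : {perm gT}) (k : graph_kind)
  (x s : gT) : gT :=
  match k with
  | CayleySum => x^-1 * s
  | TwistedCayley => sigma (x * s)
  | TwistedCayleySum => sigma (x^-1 * s)
  end.

Definition adj (gT : finGroupType) (sigma : {perm gT}) (k : graph_kind)
  (S : {set gT}) (x y : gT) : nat :=
  #|[set s in S | edge_target sigma k x s == y]|.

Definition undirected (gT : finGroupType) (sigma : {perm gT}) (k : graph_kind)
  (S : {set gT}) : Prop :=
  forall x y, adj sigma k S x y = adj sigma k S y x.

Definition adj_rel (gT : finGroupType) (sigma : {perm gT}) (k : graph_kind)
  (S : {set gT}) : rel gT := fun x y => 0 < adj sigma k S x y.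

Definition connected_graph (gT : finGroupType) (sigma : {perm gT})
  (k : graph_kind) (S : {set gT}) : Prop :=
  forall x y : gT, connect (adj_rel sigma k S) x y.

From mathcomp Require Import all_boot all_fingroup.
Import GroupScope.
Local Open Scope group_scope.

(* Undirectedness forces S to be normal when the edges use inverses, and
   sigma-stable when they are twisted by sigma.  Hence sigma preserves <<S>>
   and no edge leaves <<S>>.  Conversely 1 is adjacent to every element of S,
   and two consecutive edges from x can be labelled so as to reach x * u * v
   for any u, v in S, so the component of 1 contains <<S>>. *)

Section ConnectGenerated.

Variables (gT : finGroupType) (S : {set gT}).

Lemma gen_sub_mulr_closed (E : {set gT}) :
  1 \in E -> (forall y s, y \in E -> s \in S -> y * s \in E) -> <<S>> \subset E.
Proof.
move=> E1 ES; have [n ->] := gen_expgs S.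
elim: n => [|n IHn]; first by rewrite expg0 sub1set.
rewrite expgSr; apply/subsetP => _ /mulsgP[y s yE s1S ->].
have {}yE := subsetP IHn y yE.
by case/setU1P: s1S => [->|sS]; rewrite ?mulg1 ?ES.
Qed.

Variable e : rel gT.

Lemma gen_sub_connect :
    (forall s, s \in S -> connect e 1 s) ->
    (forall x u v, u \in S -> v \in S -> connect e x (x * u * v)) ->
  {subset <<S>> <= connect e 1}.
Proof.
move=> e1S e_uv.
pose E := [set y | connect e 1 y & [forall s in S, connect e 1 (y * s)]].
suff /subsetP genE : <<S>> \subset E by move=> y /genE; rewrite inE => /andP[].
apply: gen_sub_mulr_closed => [|y s].
  by rewrite inE connect0; apply/forall_inP => s; rewrite mul1g; apply: e1S.
rewrite !inE => /andP[e1y /forall_inP e1yS] sS.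
rewrite e1yS //; apply/forall_inP => t tS.
exact: connect_trans e1y (e_uv y s t sS tS).
Qed.

Hypothesis sym_e : symmetric e.

Lemma connected_iff_gen :
    (forall x y, x \in <<S>> -> e x y -> y \in <<S>>) ->
    (forall s, s \in S -> connect e 1 s) ->
    (forall x u v, u \in S -> v \in S -> connect e x (x * u * v)) ->
  (forall x y, connect e x y) <-> <<S>> = [set: gT].
Proof.
move=> e_gen e1S e_uv; have csym := sym_connect_sym sym_e.
split=> [conn | genT x y].
  have gen_closed : closed e <<S>>.
    by apply: intro_closed => // x z /[swap]; apply: e_gen.
  by apply/setP => y; rewrite inE -(closed_connect gen_closed (conn 1 y)) group1.
have e1 z : connect e 1 z by apply: gen_sub_connect; rewrite ?genT ?inE.
by apply: connect_trans (e1 y); rewrite csym.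
Qed.

End ConnectGenerated.

Lemma order2_involutive (T : finType) (p : {perm T}) : #[p] = 2 -> involutive p.
Proof. by move=> p2 x; rewrite -permM -expg2 -p2 expg_order perm1. Qed.

Section TwistedCayleyGraphs.

Variables (gT : finGroupType) (sigma : {perm gT}).
Hypothesis sigma_aut : sigma \in Aut [set: gT].
Hypothesis sigmaK : involutive sigma.

Let sigmaM (x y : gT) : sigma (x * y) = sigma x * sigma y.
Proof. by rewrite -(autmE sigma_aut) morphM ?inE. Qed.

Let sigma1 : sigma 1 = 1.
Proof. by rewrite -(autmE sigma_aut) morph1. Qed.

Let sigmaV x : sigma x^-1 = (sigma x)^-1.
Proof. by rewrite -(autmE sigma_aut) morphV ?inE. Qed.

Variable S : {set gT}.
Hypothesis symS : S^-1 = S.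

Let memVS s : (s^-1 \in S) = (s \in S).
Proof. by rewrite -{2}symS inE. Qed.

Lemma gen_sigma_stable :
  {homo sigma : s / s \in S} -> {homo sigma : x / x \in <<S>>}.
Proof.
move=> sigmaS x.
have : <<S>> \subset autm sigma_aut @*^-1 <<S>>.
  by rewrite gen_subG; apply/subsetP => s sS; rewrite !inE /= autmE mem_gen ?sigmaS.
by move/subsetP/[apply]; rewrite !inE /= autmE.
Qed.

Lemma adj_relP k x y :
  reflect (exists2 s, s \in S & edge_target sigma k x s = y)
          (adj_rel sigma k S x y).
Proof.
rewrite /adj_rel card_gt0; apply: (iffP (set0Pn _)) => [[s]|[s sS <-]].
  by rewrite inE => /andP[sS /eqP]; exists s.
by exists s; rewrite inE sS eqxx.
Qed.

Lemma adj_rel_edge k x {s} : s \in S ->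
  adj_rel sigma k S x (edge_target sigma k x s).
Proof. by move=> sS; apply/adj_relP; exists s. Qed.

Section Undirected.

Context {k : graph_kind}.
Hypothesis und : undirected sigma k S.

Lemma undirected_sym : symmetric (adj_rel sigma k S).
Proof. by move=> x y; rewrite /adj_rel und. Qed.

Lemma undirected_edge_back x {s} : s \in S ->
  exists2 t, t \in S & edge_target sigma k (edge_target sigma k x s) t = x.
Proof. by move=> sS; apply/adj_relP; rewrite undirected_sym adj_rel_edge. Qed.

Lemma connected_graph_iff_gen :
    (forall x s, x \in <<S>> -> s \in S -> edge_target sigma k x s \in <<S>>) ->
    (forall s, s \in S -> exists2 t, t \in S & edge_target sigma k 1 t = s) ->
    (forall x u v, u \in S -> v \in S ->
       exists2 a, a \in S & exists2 b, b \in S &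
         edge_target sigma k (edge_target sigma k x a) b = x * u * v) ->
  connected_graph sigma k S <-> <<S>> = [set: gT].
Proof.
move=> gen_edge e1S e_uv; apply: connected_iff_gen undirected_sym _ _ _.
- by move=> x _ xS /adj_relP[s sS <-]; apply: gen_edge.
- by move=> s /e1S[t tS <-]; rewrite connect1 ?adj_rel_edge.
move=> x u v uS vS; have [a aS [b bS <-]] := e_uv x u v uS vS.
exact: connect_trans (connect1 (adj_rel_edge k x aS)) (connect1 (adj_rel_edge k _ bS)).
Qed.

End Undirected.

Lemma undirected_cayley_sum_norm :
  undirected sigma CayleySum S -> [set: gT] \subset 'N(S).
Proof.
move=> und; apply/subsetP => x _; rewrite inE; apply/subsetP => _ /imsetP[s sS ->].
have [t tS /= /(canRL (mulVKg _))] := undirected_edge_back und x sS.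
by rewrite -mulgA -conjgE => <-.
Qed.

Lemma undirected_twisted_stable :
  undirected sigma TwistedCayley S -> {homo sigma : s / s \in S}.
Proof.
move=> und s sS; have [t tS /= /(congr1 sigma)] := undirected_edge_back und 1 sS.
rewrite sigmaK sigma1 mul1g => /(canRL (mulKg _)); rewrite mulg1 => tE.
by rewrite -memVS -tE.
Qed.

Lemma undirected_twisted_sum_conj :
  undirected sigma TwistedCayleySum S -> forall x s, s \in S -> sigma (s ^ x) \in S.
Proof.
move=> und x s sS; have [t tS /= /(congr1 sigma)] := undirected_edge_back und x sS.
rewrite sigmaK => /(canRL (mulVKg _)) tE.
by have -> : sigma (s ^ x) = t by rewrite tE -sigmaM conjgE mulgA.
Qed.

Lemma cayley_sum_connected :
    undirected sigma CayleySum S ->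
  connected_graph sigma CayleySum S <-> <<S>> = [set: gT].
Proof.
move=> und; have /subsetP nS := undirected_cayley_sum_norm und.
apply: connected_graph_iff_gen => // [x s xS sS | s sS | x u v uS vS] /=.
- by rewrite groupM ?groupV // mem_gen.
- by exists s; rewrite ?invg1 ?mul1g.
(* The walk x -> x^-1 * a -> a^-1 * x * b, with a^-1 * x = x * u. *)
exists (u^-1 ^ x^-1); first by rewrite memJ_norm ?nS ?inE ?memVS.
exists v => //; rewrite conjVg invMg !invgK conjgE invgK.
by rewrite mulgA mulgKV.
Qed.

Lemma twisted_cayley_connected :
    undirected sigma TwistedCayley S ->
  connected_graph sigma TwistedCayley S <-> <<S>> = [set: gT].
Proof.
move=> und; have sigmaS := undirected_twisted_stable und.
apply: connected_graph_iff_gen => // [x s xS sS | s sS | x u v uS vS] /=.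
- by apply: (gen_sigma_stable sigmaS); rewrite groupM // mem_gen.
- by exists (sigma s); rewrite ?sigmaS ?mul1g ?sigmaK.
by exists u => //; exists (sigma v); rewrite ?sigmaS ?sigmaM ?sigmaK.
Qed.

Lemma twisted_cayley_sum_connected :
    undirected sigma TwistedCayleySum S ->
  connected_graph sigma TwistedCayleySum S <-> <<S>> = [set: gT].
Proof.
move=> und; have sigmaJS := undirected_twisted_sum_conj und.
have sigmaS s : s \in S -> sigma s \in S by move/(sigmaJS 1); rewrite conjg1.
have JS s x : s \in S -> s ^ x \in S.
  by move/sigmaS/(sigmaJS (sigma x)); rewrite conjgE -!sigmaV -!sigmaM sigmaK -conjgE.
apply: connected_graph_iff_gen => // [x s xS sS | s sS | x u v uS vS] /=.
- by apply: (gen_sigma_stable sigmaS); rewrite groupM ?groupV // mem_gen.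
- by exists (sigma s); rewrite ?sigmaS ?invg1 ?mul1g ?sigmaK.
exists (u^-1 ^ x^-1); first by rewrite JS ?memVS.
exists (sigma v); rewrite ?sigmaS // sigmaM sigmaV !sigmaK conjVg invMg !invgK.
by rewrite conjgE invgK mulgA mulgKV.
Qed.

End TwistedCayleyGraphs.

Theorem corollary2p7 (gT : finGroupType) (sigma : {perm gT}) (S : {set gT})
  (k : graph_kind) :
  4 <= #|[set: gT]| ->
  sigma \in Aut [set: gT] -> #[sigma] = 2 ->
  S^-1 = S ->
  undirected sigma k S ->
  (connected_graph sigma k S <-> <<S>> = [set: gT]).
Proof.
move=> _ sigma_aut /order2_involutive sigmaK symS.
case: k => [/cayley_sum_connected | /twisted_cayley_connected |
            /twisted_cayley_sum_connected]; exact.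
Qed.
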